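(* Let $f_1:\mathbb{R}^m\to(-\infty,+\infty]$ be proper convex lower semi-continuous, $B\in\mathbb{R}^{m\times d}$, and $f_2(x)=\frac1n\sum_{i=1}^n\phi_i(x)$ with each $\phi_i:\mathbb{R}^d\to\mathbb{R}$ smooth and convex. Let $(x_k,v_k)_{k\ge1}$ be generated by Algorithm 1 (described in the context) with parameters $c>0$, $\alpha\in(0,1]$ and $0<\lambda\le 1/\rho_{\max}(BB^T)$. Let $x^*$ be a minimizer of $f_1(Bx)+f_2(x)$ over $\mathbb{R}^d$ and let $v^*\in\mathbb{R}^m$ be such that, for every $k$, with $h_k(x)=\frac{\lambda}{\gamma_k}f_1(\frac{\gamma_k}{\lambda}x)$, $$v^*=(I-\mathrm{Prox}_{h_k})\Big(\tfrac{\lambda}{\gamma_k}B\big(x^*-\gamma_k\nabla f_2(x^* )\big)+(I-\lambda BB^T)v^*\Big),\qquad x^*=x^*-\gamma_k\nabla f_2(x^* )-\gamma_kB^Tv^*.$$ Then for every $k\ge1$, $$\begin{aligned}\mathbb{E}^{(k+1)}\Big(\|x_{k+1}-x^*\|_2^2+\tfrac{\gamma_{k+1}^2}{\lambda}\|v_{k+1}-v^*\|_2^2\Big)\le\ &\mathbb{E}^{(k)}\big(\|x_k-x^*\|_2^2\big)+\tfrac{\gamma_k^2}{\lambda}\big(1-\lambda\rho_{\min}(BB^T)\big)\mathbb{E}^{(k)}\big(\|v_k-v^*\|_2^2\big)\\ &-2\gamma_k\,\mathbb{E}^{(k)}\langle\nabla f_2(x_k)-\nabla f_2(x^* ),x_k-x^*\rangle\\&+\gamma_k^2\,\mathbb{E}^{(k+1)}\big(\|\nabla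 f_2^{[i_k]}(x_k)-\nabla f_2(x^* )\|_2^2\big).\end{aligned}$$
   Context: $\mathrm{Prox}_f(y)=\arg\min_x\{f(x)+\frac12\|x-y\|_2^2\}$. $\rho_{\max}(BB^T)$ and $\rho_{\min}(BB^T)$ are the largest and smallest eigenvalues of $BB^T$. Stochastic gradient: fix a batch size $p$ dividing $n$; for $i\in\{1,\dots,n/p\}$ let $\nabla f_2^{[i]}(x)=\frac1p\sum_{j=(i-1)p+1}^{ip}\nabla\phi_j(x)$. Algorithm 1: choose $x_1\in\mathbb{R}^d$, $v_1\in\mathbb{R}^m$; for $k=1,2,\dots$: set $\gamma_k=c/k^\alpha$; draw $i_k$ from $\{1,\dots,n/p\}$, each value with probability $p/n$, independently of the past; set $x_{k+1/2}=x_k-\gamma_k\nabla f_2^{[i_k]}(x_k)$, $v_{k+1}=\frac{\lambda}{\gamma_k}\big(I-\mathrm{Prox}_{\frac{\gamma_k}{\lambda}f_1}\big)\big(Bx_{k+1/2}+(I-\lambda BB^T)\frac{\gamma_k}{\lambda}v_k\big)$, $x_{k+1}=x_{k+1/2}-\gamma_kB^Tv_{k+1}$. $\mathbb{E}^{(k)}(\cdot)$ denotes expectation with respect to all random indices drawn up to the $k$-th iterate (i.e. $i_1,\dots,i_{k-1}$, which determine $x_k,v_k$); thus $\mathbb{E}^{(k+1)}$ also averages over $i_k$. *)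

From HB Require Import structures.
From mathcomp Require Import all_boot all_order all_algebra.
From mathcomp Require Import all_classical all_reals all_analysis.
Set Implicit Arguments. Unset Strict Implicit. Unset Printing Implicit Defensive.
Import Order.TTheory GRing.Theory Num.Theory.
Import numFieldNormedType.Exports.
Local Open Scope ring_scope.

Definition dotv {R : realType} {d : nat} (u w : 'cV[R]_d) : R :=
  \sum_(j < d) u j 0 * w j 0.
Definition sqn {R : realType} {d : nat} (u : 'cV[R]_d) : R := dotv u u.

Definition convex_fun {R : realType} {d : nat} (f : 'cV[R]_d -> R) : Prop :=
  forall (x y : 'cV[R]_d) (t : R), 0 <= t <= 1 ->
    f (t *: x + (1 - t) *: y) <= t * f x + (1 - t) * f y.

Definition proper_fun {R : realType} {m : nat} (f : 'cV[R]_m -> \bar R) : Prop :=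
  (forall x, f x != -oo%E) /\ (exists x, f x != +oo%E).
Definition econvex_fun {R : realType} {m : nat} (f : 'cV[R]_m -> \bar R) : Prop :=
  forall (x y : 'cV[R]_m) (t : R), 0 < t < 1 ->
    (f ((t *: x + (1 - t) *: y)%R) <= t%:E * f x + ((1 - t)%R)%:E * f y)%E.

Definition is_gradient {R : realType} {d : nat} (f : 'cV[R]_d -> R)
  (g : 'cV[R]_d -> 'cV[R]_d) : Prop :=
  forall x, differentiable f x /\ forall h, 'd f x h = dotv (g x) h.

Definition is_prox {R : realType} {m : nat} (h : 'cV[R]_m -> \bar R)
  (y q : 'cV[R]_m) : Prop :=
  forall x, (h q + (2^-1 * sqn (q - y))%R%:E <= h x + (2^-1 * sqn (x - y))%R%:E)%E.

(* Minibatch gradient nabla f_2^{[i]} (blocks indexed from 0):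
   block i = { j : i*p <= j < i*p + p }. *)
Definition block_grad {R : realType} {d n : nat} (p N : nat)
  (grad : 'I_n -> 'cV[R]_d -> 'cV[R]_d) (i : 'I_N) (x : 'cV[R]_d) : 'cV[R]_d :=
  (p%:R)^-1 *: \sum_(j < n | (i * p <= j < i * p + p)%N) grad j x.

Definition full_grad {R : realType} {d n : nat}
  (grad : 'I_n -> 'cV[R]_d -> 'cV[R]_d) (x : 'cV[R]_d) : 'cV[R]_d :=
  (n%:R)^-1 *: \sum_(j < n) grad j x.

Definition gamma {R : realType} (c alpha : R) (k : nat) : R :=
  c / (k%:R `^ alpha).

(* Algorithm 1.  The iterate x_{t+1}, v_{t+1} (1-based index k = t+1) is a
   function X t s, V t s of the t indices s = (i_1, ..., i_t) drawn so far
   (blocks numbered 0 .. N-1).  x_1 = X 0 [tuple], v_1 = V 0 [tuple] arbitrary. *)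
Definition algorithm1 {R : realType} {m d n : nat} (p N : nat)
  (f1 : 'cV[R]_m -> \bar R) (B : 'M[R]_(m, d))
  (grad : 'I_n -> 'cV[R]_d -> 'cV[R]_d) (c alpha lambda : R)
  (X : forall t : nat, t.-tuple 'I_N -> 'cV[R]_d)
  (V : forall t : nat, t.-tuple 'I_N -> 'cV[R]_m) : Prop :=
  forall (t : nat) (s : t.-tuple 'I_N) (i : 'I_N),
    let g := gamma c alpha t.+1 in
    let xh := X t s - g *: block_grad p grad i (X t s) in
    let z := B *m xh + (1%:M - lambda *: (B *m B^T)) *m ((g / lambda) *: V t s) in
    (exists q, is_prox (fun u => ((g / lambda)%R%:E * f1 u)%E) z q /\
       V t.+1 (rcons_tuple s i) = (lambda / g) *: (z - q)) /\
    X t.+1 (rcons_tuple s i) = xh - g *: (B^T *m V t.+1 (rcons_tuple s i)).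

(* E^{(k)} with k = t+1: uniform average over the t independent indices. *)
Definition expect {R : realType} (N t : nat) (F : t.-tuple 'I_N -> R) : R :=
  (N%:R ^+ t)^-1 * \sum_(s : t.-tuple 'I_N) F s.

(* E^{(k+1)}: average over (i_1,...,i_{k-1}) = s and the fresh index i_k = i. *)
Definition expect_next {R : realType} (N t : nat)
  (G : t.-tuple 'I_N -> 'I_N -> R) : R :=
  (N%:R ^+ t.+1)^-1 * \sum_(s : t.-tuple 'I_N) \sum_(i : 'I_N) G s i.

From HB Require Import structures.
From mathcomp Require Import all_boot all_order all_algebra.
From mathcomp Require Import all_classical all_reals all_analysis.
From mathcomp Require Import lra ring.
Import Order.TTheory GRing.Theory Num.Theory.
Import numFieldNormedType.Exports.
Local Open Scope ring_scope.

(* Write a := gamma_k / lambda.  The dual step is v_{k+1} = a^-1 (I - Prox_{a f1}) z_k,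
   and since Prox_{h_k}(w) = a^-1 Prox_{a f1}(a w) the fixed-point equation reads
   v* = a^-1 (I - Prox_{a f1}) (a w).  Firm nonexpansiveness of I - Prox_{a f1} gives
   a |v_{k+1} - v*|^2 <= <v_{k+1} - v*, z_k - a w>; expanding |x_{k+1} - x*|^2 and using
   lambda B B^T <= I and B B^T >= rho_min I (Rayleigh quotients of the symmetric matrix
   B B^T) yields the estimate for every realisation of i_k, with the minibatch gradient
   in the cross term.  Averaging over i_k turns that minibatch gradient into the full
   gradient, because the blocks partition {1, ..., n}. *)

Section InnerProduct.
Context {R : realType}.

Lemma dotvDl {d} (u1 u2 w : 'cV[R]_d) : dotv (u1 + u2) w = dotv u1 w + dotv u2 w.
Proof. by rewrite /dotv -big_split; apply: eq_bigr => j _; rewrite !mxE mulrDl. Qed.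

Lemma dotvDr {d} (u w1 w2 : 'cV[R]_d) : dotv u (w1 + w2) = dotv u w1 + dotv u w2.
Proof. by rewrite /dotv -big_split; apply: eq_bigr => j _; rewrite !mxE mulrDr. Qed.

Lemma dotvNl {d} (u w : 'cV[R]_d) : dotv (- u) w = - dotv u w.
Proof. by rewrite /dotv -sumrN; apply: eq_bigr => j _; rewrite !mxE mulNr. Qed.

Lemma dotvNr {d} (u w : 'cV[R]_d) : dotv u (- w) = - dotv u w.
Proof. by rewrite /dotv -sumrN; apply: eq_bigr => j _; rewrite !mxE mulrN. Qed.

Lemma dotvBl {d} (u1 u2 w : 'cV[R]_d) : dotv (u1 - u2) w = dotv u1 w - dotv u2 w.
Proof. by rewrite dotvDl dotvNl. Qed.

Lemma dotvBr {d} (u w1 w2 : 'cV[R]_d) : dotv u (w1 - w2) = dotv u w1 - dotv u w2.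
Proof. by rewrite dotvDr dotvNr. Qed.

Lemma dotvZl {d} k (u w : 'cV[R]_d) : dotv (k *: u) w = k * dotv u w.
Proof. by rewrite /dotv mulr_sumr; apply: eq_bigr => j _; rewrite !mxE mulrA. Qed.

Lemma dotvZr {d} k (u w : 'cV[R]_d) : dotv u (k *: w) = k * dotv u w.
Proof. by rewrite /dotv mulr_sumr; apply: eq_bigr => j _; rewrite !mxE mulrCA. Qed.

Lemma dotvC {d} (u w : 'cV[R]_d) : dotv u w = dotv w u.
Proof. by apply: eq_bigr => j _; rewrite mulrC. Qed.

Lemma dotv0r {d} (u : 'cV[R]_d) : dotv u 0 = 0.
Proof. by rewrite /dotv big1 // => j _; rewrite mxE mulr0. Qed.

Lemma dotv_suml {d} (I : Type) (r : seq I) (f : I -> 'cV[R]_d) (w : 'cV[R]_d) :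
  dotv (\sum_(i <- r) f i) w = \sum_(i <- r) dotv (f i) w.
Proof.
elim: r => [|a r IH]; last by rewrite !big_cons dotvDl IH.
by rewrite !big_nil dotvC dotv0r.
Qed.

Lemma dotv_mulmx {p q} (A : 'M[R]_(p, q)) (u : 'cV[R]_p) (w : 'cV[R]_q) :
  dotv u (A *m w) = dotv (A^T *m u) w.
Proof.
rewrite /dotv; under eq_bigr do rewrite mxE big_distrr.
rewrite exchange_big; apply: eq_bigr => k _; rewrite !mxE big_distrl.
by apply: eq_bigr => j _; rewrite !mxE /= mulrCA mulrA.
Qed.

Lemma dotv_gram {p q} (A : 'M[R]_(p, q)) (w : 'cV[R]_p) :
  dotv w ((A *m A^T) *m w) = sqn (A^T *m w).
Proof. by rewrite -mulmxA dotv_mulmx. Qed.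

Lemma sqn_ge0 {d} (u : 'cV[R]_d) : 0 <= sqn u.
Proof. by apply: sumr_ge0 => j _; rewrite -expr2 sqr_ge0. Qed.

Lemma sqn_eq0 {d} (u : 'cV[R]_d) : sqn u = 0 -> u = 0.
Proof.
move=> /eqP; rewrite /sqn /dotv psumr_eq0 => [/allP u0|j _]; last first.
  by rewrite -expr2 sqr_ge0.
apply/matrixP => i j; rewrite ord1 mxE.
by have := u0 i (mem_index_enum _); rewrite mulf_eq0 orbb => /eqP.
Qed.

Lemma sqnD {d} (u w : 'cV[R]_d) : sqn (u + w) = sqn u + 2 * dotv u w + sqn w.
Proof. by rewrite /sqn !dotvDl !dotvDr (dotvC w u); ring. Qed.

Lemma sqnB {d} (u w : 'cV[R]_d) : sqn (u - w) = sqn u - 2 * dotv u w + sqn w.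
Proof. by rewrite /sqn !dotvBl !dotvBr (dotvC w u); ring. Qed.

Lemma sqnZ {d} k (u : 'cV[R]_d) : sqn (k *: u) = k ^+ 2 * sqn u.
Proof. by rewrite /sqn dotvZl dotvZr mulrA. Qed.

End InnerProduct.

Lemma le0_of_forall_le_mul (R : realFieldType) (a b : R) :
  (forall t, 0 < t < 1 -> a <= t * b) -> a <= 0.
Proof.
move=> small; rewrite leNgt; apply/negP => a_gt0.
have k_gt0 : 0 < 2 * (a + `|b|) by rewrite mulr_gt0 // ltr_wpDr.
pose t := a / (2 * (a + `|b|)).
have t_gt0 : 0 < t by rewrite divr_gt0.
have t_lt1 : t < 1 by rewrite ltr_pdivrMr // mul1r; have := normr_ge0 b; lra.
have : a <= t * `|b|.
  apply: le_trans (small t _) _; first by rewrite t_gt0 t_lt1.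
  by apply: ler_wpM2l; [exact: ltW | exact: ler_norm].
rewrite -(ler_pM2r k_gt0) [X in _ <= X]mulrAC divfK ?gt_eqF //.
have := normr_ge0 b; nra.
Qed.

Section SymmetricQuadraticForm.
Context {R : realType} {m : nat}.
Local Open Scope classical_set_scope.

Lemma sqn_trmx (u : 'rV[R]_m) : sqn u^T = \sum_(j < m) u ord0 j * u ord0 j.
Proof. by apply: eq_bigr => j _; rewrite !mxE. Qed.

Lemma quadform_trmx (S : 'M[R]_m) (u : 'rV[R]_m) :
  dotv u^T (S *m u^T) = \sum_(j < m) u ord0 j * \sum_(k < m) S j k * u ord0 k.
Proof.
apply: eq_bigr => j _; rewrite !mxE.
by congr (_ * _); apply: eq_bigr => k _; rewrite !mxE.
Qed.

Lemma continuous_sqn_trmx : continuous (fun u : 'rV[R]_m => sqn u^T).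
Proof.
have -> : (fun u : 'rV[R]_m => sqn u^T) =
  fun u => \sum_(j < m) u ord0 j * u ord0 j by exact/funext/sqn_trmx.
apply: (@continuous_big _ _ _ _ _ add_continuous) => j _ u.
by apply: continuousM; exact: coord_continuous.
Qed.

Lemma continuous_quadform (S : 'M[R]_m) :
  continuous (fun u : 'rV[R]_m => dotv u^T (S *m u^T)).
Proof.
have -> : (fun u : 'rV[R]_m => dotv u^T (S *m u^T)) =
  fun u => \sum_(j < m) u ord0 j * \sum_(k < m) S j k * u ord0 k.
  exact/funext/quadform_trmx.
apply: (@continuous_big _ _ _ _ _ add_continuous) => j _ u.
apply: continuousM; first exact: coord_continuous.
apply: (@continuous_big _ _ _ _ _ add_continuous) => k _ v.
by apply: continuousM; [exact: cst_continuous | exact: coord_continuous].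
Qed.

Lemma compact_unit_sphere : compact [set u : 'rV[R]_m | sqn u^T = 1].
Proof.
apply: bounded_closed_compact; last first.
  apply: (@preimage_closed _ _ (fun u : 'rV[R]_m => sqn u^T) [set x | x = 1]).
    by move=> u _; exact: continuous_sqn_trmx.
  exact: closed_eq.
rewrite /bounded_set /= /bounded_near; near=> M => u /= u1.
have norm_u_le1 : `|u| <= 1.
  rewrite [leLHS]/Num.norm /= mx_normrE; apply: bigmax_le => // -[i j] _ /=.
  rewrite ord1 ler_norml.
  have : u ord0 j * u ord0 j <= 1.
    rewrite -u1 sqn_trmx (bigD1 j) //= lerDl.
    by apply: sumr_ge0 => k _; rewrite -expr2 sqr_ge0.
  by move=> ?; apply/andP; split; nra.
apply: le_trans norm_u_le1 _; near: M; apply: nbhs_pinfty_ge; exact: num_real.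
Unshelve. all: by end_near.
Qed.

Lemma quadform_max_on_sphere (S : 'M[R]_m) : (0 < m)%N ->
  exists2 c : 'cV[R]_m, sqn c = 1 &
    forall w, dotv w (S *m w) <= dotv c (S *m c) * sqn w.
Proof.
move=> m_gt0; pose j0 := Ordinal m_gt0.
have sphere_n0 : [set u : 'rV[R]_m | sqn u^T = 1] !=set0.
  exists (delta_mx 0 j0); rewrite /= sqn_trmx (bigD1 j0) //= big1 => [|k /negbTE k_j0].
    by rewrite !mxE eqxx mulr1 addr0.
  by rewrite !mxE k_j0 andbF mulr0.
have [c c1 cmax] := EVT_max_rV sphere_n0 compact_unit_sphere
  (continuous_subspaceT (@continuous_quadform S)).
exists c^T => [|w]; first by move: c1; rewrite inE.
have [->|w_n0] := eqVneq w 0; first by rewrite mulmx0 dotv0r /sqn dotv0r mulr0.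
have sqn_w_gt0 : 0 < sqn w.
  by rewrite lt_neqAle sqn_ge0 andbT; apply/eqP => /esym /sqn_eq0; apply/eqP.
set r := Num.sqrt (sqn w).
have r_gt0 : 0 < r by rewrite sqrtr_gt0.
have sphere_w : (r^-1 *: w)^T \in [set u : 'rV[R]_m | sqn u^T = 1].
  by rewrite inE /= trmxK sqnZ exprVn sqr_sqrtr ?sqn_ge0 // mulVf ?gt_eqF.
have := cmax _ sphere_w; rewrite /= trmxK -scalemxAr dotvZl dotvZr mulrA -expr2.
rewrite exprVn ler_pdivrMl ?exprn_gt0 // sqr_sqrtr ?sqn_ge0 //.
by rewrite mulrC.
Qed.

Lemma sym_quadform_max_eigenvector (S : 'M[R]_m) (mu : R) (c : 'cV[R]_m) :
  S^T = S -> (forall w, dotv w (S *m w) <= mu * sqn w) ->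
  dotv c (S *m c) = mu * sqn c -> S *m c = mu *: c.
Proof.
move=> S_sym quad_le c_tight; set r := S *m c - mu *: c.
apply/eqP; rewrite -subr_eq0 -/r; apply/eqP/sqn_eq0/eqP.
rewrite eq_le sqn_ge0 andbT -subr_le0.
apply: (@le0_of_forall_le_mul _ _ ((mu * sqn r - dotv r (S *m r)) / 2)).
move=> t /andP[t_gt0 _].
have c_r : dotv c (S *m r) = dotv r (S *m c) by rewrite dotv_mulmx S_sym dotvC.
have sqn_r : sqn r = dotv r (S *m c) - mu * dotv c r.
  by rewrite /sqn {2}/r dotvBr dotvZr (dotvC c r).
(* first-order optimality of [c] in the direction [r] *)
have := quad_le (c + t *: r).
rewrite mulmxDr -scalemxAr dotvDl !dotvDr !dotvZl !dotvZr sqnD sqnZ dotvZr.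
rewrite c_r c_tight; nra.
Qed.

Lemma sym_quadform_le (S : 'M[R]_m) (r : R) : S^T = S ->
  (forall a, eigenvalue S a -> a <= r) -> forall w, dotv w (S *m w) <= r * sqn w.
Proof.
move=> S_sym ub w; case: (posnP m) => [m0 | m_gt0].
  have -> : w = 0.
    by apply/matrixP => i j; have : (i < 0)%N by rewrite -m0 ltn_ord.
  by rewrite mulmx0 dotv0r /sqn dotv0r mulr0.
have [c c1 cmax] := quadform_max_on_sphere S m_gt0.
set mu := dotv c (S *m c) in cmax.
have Sc : S *m c = mu *: c.
  by apply: sym_quadform_max_eigenvector => //; rewrite c1 mulr1.
have mu_eigen : eigenvalue S mu.
  apply/eigenvalueP; exists c^T; first by rewrite -{1}S_sym -trmx_mul Sc linearZ.
  by apply: contraPneq c1 => /(congr1 trmx); rewrite trmxK trmx0 => ->;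
    rewrite /sqn dotv0r; apply/eqP; rewrite eq_sym oner_eq0.
by apply: le_trans (cmax w) _; rewrite ler_wpM2r ?sqn_ge0 ?ub.
Qed.

Lemma sym_quadform_ge (S : 'M[R]_m) (r : R) : S^T = S ->
  (forall a, eigenvalue S a -> r <= a) -> forall w, r * sqn w <= dotv w (S *m w).
Proof.
move=> S_sym lb w; rewrite -lerN2 -mulNr -dotvNr -mulNmx.
apply: sym_quadform_le => [|a]; first by rewrite linearN /= S_sym.
move=> /eigenvalueP [v vS v_n0]; rewrite lerNr; apply: lb.
by apply/eigenvalueP; exists v => //; rewrite scaleNr -vS mulmxN opprK.
Qed.

End SymmetricQuadraticForm.

Lemma mul_le1_of_le_inv {R : realFieldType} {l r a : R} :
  0 < l -> l <= r^-1 -> a <= r -> l * a <= 1.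
Proof.
move=> l_gt0 l_le a_le; have r_gt0 : 0 < r by rewrite -invr_gt0 (lt_le_trans l_gt0).
apply: le_trans (ler_wpM2l (ltW l_gt0) a_le) _.
apply: le_trans (ler_wpM2r (ltW r_gt0) l_le) _.
by rewrite mulVf ?gt_eqF.
Qed.

Section GramMatrix.
Context {R : realType} {m d : nat} {B : 'M[R]_(m, d)}.

Lemma gram_sym : (B *m B^T)^T = B *m B^T.
Proof. by rewrite trmx_mul trmxK. Qed.

Lemma gram_eigen_lb {r : R} : (forall a, eigenvalue (B *m B^T) a -> r <= a) ->
  forall w, r * sqn w <= sqn (B^T *m w).
Proof. by move=> lb w; rewrite -dotv_gram; exact: sym_quadform_ge gram_sym lb w. Qed.

Lemma gram_eigen_ub {r : R} : (forall a, eigenvalue (B *m B^T) a -> a <= r) ->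
  forall w, sqn (B^T *m w) <= r * sqn w.
Proof. by move=> ub w; rewrite -dotv_gram; exact: sym_quadform_le gram_sym ub w. Qed.

Lemma scaled_gram_le1 {lambda r : R} : 0 < lambda -> lambda <= r^-1 ->
  (forall a, eigenvalue (B *m B^T) a -> a <= r) ->
  forall w, lambda * sqn (B^T *m w) <= sqn w.
Proof.
move=> lambda_gt0 lambda_le ub w.
apply: (le_trans (ler_wpM2l (ltW lambda_gt0) (gram_eigen_ub ub w))).
by rewrite mulrA ler_piMl ?sqn_ge0 // (mul_le1_of_le_inv lambda_gt0 lambda_le).
Qed.

End GramMatrix.

Section ScaledProx.
Context {R : realType} {m : nat} {f : 'cV[R]_m -> \bar R} {a : R}.
Hypotheses (a_gt0 : 0 < a) (f_proper : proper_fun f) (f_convex : econvex_fun f).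

Lemma prox_scale_fin_num {y q : 'cV[R]_m} :
  is_prox (fun u => (a%:E * f u)%E) y q -> f q \is a fin_num.
Proof.
have [f_nninfty [x0 fx0]] := f_proper => /(_ x0).
case: (f x0) fx0 (f_nninfty x0) => [r0| |] // _ _.
case: (f q) (f_nninfty q) => [r| |] // _.
by rewrite gt0_muley ?lte_fin // addye.
Qed.

Lemma prox_scale_variational {y q x : 'cV[R]_m} {fq fx : R} :
  is_prox (fun u => (a%:E * f u)%E) y q -> f q = fq%:E -> f x = fx%:E ->
  dotv (y - q) (x - q) <= a * (fx - fq).
Proof.
move=> prox_q fq_E fx_E; rewrite -subr_le0.
apply: (@le0_of_forall_le_mul _ _ (sqn (x - q) / 2)) => t /andP[t_gt0 t_lt1].
have f_mid := f_convex x q t; rewrite t_gt0 t_lt1 fx_E fq_E in f_mid.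
have := le_trans (prox_q _) (leeD2r _ (lee_wpmul2l (ltW _) (f_mid isT))).
rewrite fq_E lte_fin a_gt0 -!EFinM -!EFinD lee_fin.
have -> : t *: x + (1 - t) *: q - y = (q - y) + t *: (x - q).
  by apply/matrixP => i j; rewrite !mxE; ring.
rewrite (sqnD (q - y)) sqnZ dotvZr -(opprB y q) dotvNl => /(_ isT) ineq.
rewrite -(ler_pM2l t_gt0); nra.
Qed.

Lemma prox_scale_firmly_nonexpansive {y y' q q' : 'cV[R]_m} :
  is_prox (fun u => (a%:E * f u)%E) y q -> is_prox (fun u => (a%:E * f u)%E) y' q' ->
  sqn ((y - q) - (y' - q')) <= dotv ((y - q) - (y' - q')) (y - y').
Proof.
move=> prox_q prox_q'.
have fq_E := esym (fineK (prox_scale_fin_num prox_q)).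
have fq'_E := esym (fineK (prox_scale_fin_num prox_q')).
have vi := prox_scale_variational prox_q fq_E fq'_E.
have vi' := prox_scale_variational prox_q' fq'_E fq_E.
have -> : y - y' = ((y - q) - (y' - q')) + (q - q').
  by apply/matrixP => i j; rewrite !mxE; ring.
rewrite dotvDr lerDl dotvBl.
rewrite -(opprB q q') dotvNr in vi; lra.
Qed.

Lemma is_prox_scale {w p : 'cV[R]_m} :
  is_prox (fun u => ((a^-1)%:E * f (a *: u))%E) w p ->
  is_prox (fun u => (a%:E * f u)%E) (a *: w) (a *: p).
Proof.
move=> prox_p x; have := prox_p (a^-1 *: x).
rewrite scalerA mulfV ?gt_eqF // scale1r.
rewrite -(@lee_pmul2l _ (a ^+ 2)%:E) ?lte_fin ?exprn_gt0 //.
rewrite !muleDr ?fin_num_adde_defl // !muleA -!EFinM.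
have -> : a ^+ 2 * a^-1 = a by rewrite expr2 mulfK ?gt_eqF.
have scale_half_sqn u v : a ^+ 2 * (2^-1 * sqn (u - v)) = 2^-1 * sqn (a *: u - a *: v).
  by rewrite -scalerBr sqnZ mulrCA.
by rewrite !scale_half_sqn scalerA mulfV ?gt_eqF // scale1r.
Qed.

Lemma prox_scale_dual_cocoercive {z w q vs : 'cV[R]_m} :
  is_prox (fun u => (a%:E * f u)%E) z q ->
  is_prox (fun u => ((a^-1)%:E * f (a *: u))%E) w (w - vs) ->
  a * sqn (a^-1 *: (z - q) - vs) <= dotv (a^-1 *: (z - q) - vs) (z - a *: w).
Proof.
move=> prox_q prox_w.
have := prox_scale_firmly_nonexpansive prox_q (is_prox_scale prox_w).
have -> : (z - q) - (a *: w - a *: (w - vs)) = a *: (a^-1 *: (z - q) - vs).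
  by apply/matrixP => i j; rewrite !mxE; field; rewrite gt_eqF.
by rewrite sqnZ dotvZl expr2 -mulrA ler_pM2l.
Qed.

End ScaledProx.

Section PrimalDualStep.
Context {R : realType} {m d : nat} {B : 'M[R]_(m, d)} {lambda : R}.
Hypotheses (lambda_gt0 : 0 < lambda)
  (lambda_BBt_le1 : forall w, lambda * sqn (B^T *m w) <= sqn w).

Lemma primal_dual_sqn_le {g : R} {e : 'cV[R]_d} {u dv : 'cV[R]_m} : 0 < g ->
  g / lambda * sqn dv <=
    dotv dv (B *m e + (1%:M - lambda *: (B *m B^T)) *m ((g / lambda) *: u)) ->
  sqn (e - g *: (B^T *m dv)) + g ^+ 2 / lambda * sqn dv <=
    sqn e + g ^+ 2 / lambda * sqn u - g ^+ 2 * sqn (B^T *m u).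
Proof.
move=> g_gt0; set a := g / lambda.
have a_gt0 : 0 < a by rewrite divr_gt0.
have g_E : g = a * lambda by rewrite divfK ?gt_eqF.
have k_E : g ^+ 2 / lambda = a ^+ 2 * lambda by rewrite g_E; field; rewrite gt_eqF.
rewrite mulmxBl mul1mx -scalemxAl -mulmxA dotvDr dotv_mulmx dotvBr !dotvZr.
rewrite -scalemxAr dotv_mulmx dotvZr => dual.
have psd := lambda_BBt_le1 (dv - u).
rewrite mulmxBr !sqnB in psd.
rewrite sqnB dotvZr sqnZ (dotvC e) k_E g_E.
(* [2 a lambda] times the dual inequality plus [a^2 lambda] times [psd] *)
have c_dual : 0 <= 2 * a * lambda by nra.
have c_psd : 0 <= a ^+ 2 * lambda by rewrite mulr_ge0 ?sqr_ge0 ?ltW.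
have := ler_wpM2l c_dual dual; have := ler_wpM2l c_psd psd.
clearbody a; lra.
Qed.

Context {f1 : 'cV[R]_m -> \bar R} {rho_min : R}.
Hypotheses (f1_proper : proper_fun f1) (f1_convex : econvex_fun f1)
  (rho_min_le : forall w, rho_min * sqn w <= sqn (B^T *m w)).

Lemma primal_dual_one_step {g gn : R} {x xs G F xn : 'cV[R]_d} {v vs vn q : 'cV[R]_m} :
  0 < g -> 0 <= gn <= g ->
  let z := B *m (x - g *: G) + (1%:M - lambda *: (B *m B^T)) *m ((g / lambda) *: v) in
  is_prox (fun u => ((g / lambda)%:E * f1 u)%E) z q ->
  vn = (lambda / g) *: (z - q) ->
  xn = (x - g *: G) - g *: (B^T *m vn) ->
  let w := (lambda / g) *: (B *m (xs - g *: F)) + (1%:M - lambda *: (B *m B^T)) *m vs in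
  is_prox (fun u => ((lambda / g)%:E * f1 ((g / lambda) *: u))%E) w (w - vs) ->
  xs = xs - g *: F - g *: (B^T *m vs) ->
  sqn (xn - xs) + gn ^+ 2 / lambda * sqn (vn - vs) <=
  sqn (x - xs) + g ^+ 2 / lambda * (1 - lambda * rho_min) * sqn (v - vs)
  - 2 * g * dotv (G - F) (x - xs) + g ^+ 2 * sqn (G - F).
Proof.
move=> g_gt0 /andP[gn_ge0 gn_le] z prox_q vn_E xn_E w prox_w xs_fix.
set a := g / lambda.
have a_gt0 : 0 < a by rewrite divr_gt0.
rewrite -[lambda / g]invf_div -/a in vn_E prox_w.
have dual := prox_scale_dual_cocoercive a_gt0 f1_proper f1_convex prox_q prox_w.
rewrite -vn_E in dual.
set e := (x - g *: G) - (xs - g *: F).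
have zw : z - a *: w = B *m e + (1%:M - lambda *: (B *m B^T)) *m (a *: (v - vs)).
  have a_inv : a * (lambda / g) = 1 by rewrite /a; field; rewrite ?gt_eqF.
  rewrite /z /w /e scalerDr scalerA a_inv scale1r.
  by rewrite -!scalemxAr !mulmxBr scalerBr opprD addrACA.
rewrite zw in dual.
have xn_xs : xn - xs = e - g *: (B^T *m (vn - vs)).
  rewrite {1}xs_fix xn_E /e mulmxBr scalerBr.
  by apply/matrixP => i j; rewrite !mxE; ring.
have := primal_dual_sqn_le g_gt0 dual; rewrite -xn_xs.
have -> : e = (x - xs) - g *: (G - F).
  by apply/matrixP => i j; rewrite /e !mxE; ring.
rewrite (sqnB (x - xs)) dotvZr sqnZ (dotvC (x - xs)).
have k_ge0 : 0 <= g ^+ 2 / lambda by rewrite divr_ge0 ?sqr_ge0 ?ltW.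
have gn_step : gn ^+ 2 / lambda * sqn (vn - vs) <= g ^+ 2 / lambda * sqn (vn - vs).
  apply: ler_wpM2r; first exact: sqn_ge0.
  apply: ler_wpM2r; first by rewrite invr_ge0 ltW.
  by rewrite lerXn2r // ?nnegrE ?(ltW g_gt0).
have rho_step := ler_wpM2l (sqr_ge0 g) (rho_min_le (v - vs)).
have -> : g ^+ 2 / lambda * (1 - lambda * rho_min) * sqn (v - vs) =
  g ^+ 2 / lambda * sqn (v - vs) - g ^+ 2 * (rho_min * sqn (v - vs)).
  by field; rewrite gt_eqF.
lra.
Qed.

End PrimalDualStep.

Lemma gamma_gt0 (R : realType) (c alpha : R) (k : nat) :
  0 < c -> (0 < k)%N -> 0 < gamma c alpha k.
Proof. by move=> c_gt0 k_gt0; rewrite divr_gt0 // powR_gt0 // ltr0n. Qed.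

Lemma gamma_le (R : realType) (c alpha : R) (k k' : nat) :
  0 < c -> 0 <= alpha -> (0 < k <= k')%N -> gamma c alpha k' <= gamma c alpha k.
Proof.
move=> c_gt0 alpha_ge0 /andP[k_gt0 k_le]; have k'_gt0 := leq_trans k_gt0 k_le.
rewrite ler_pM2l // lef_pV2 ?posrE ?powR_gt0 ?ltr0n //.
by rewrite ge0_ler_powR ?nnegrE ?ler0n ?ler_nat.
Qed.

Lemma sum_block_grad {R : realType} {d n p N : nat}
  {grad : 'I_n -> 'cV[R]_d -> 'cV[R]_d} (y : 'cV[R]_d) :
  (0 < p)%N -> n = (N * p)%N ->
  \sum_(i < N) block_grad p grad i y = N%:R *: full_grad grad y.
Proof.
move=> p_gt0 n_E; case: (posnP N) => [N0 | N_gt0].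
  by rewrite N0 big_ord0 scale0r.
rewrite /block_grad /full_grad -scaler_sumr.
have -> : \sum_(i < N) \sum_(j < n | (i * p <= j < i * p + p)%N) grad j y =
          \sum_(j < n) grad j y.
  under eq_bigr do rewrite big_mkcond /=.
  (* each index [j] lies in exactly one block, namely block [j %/ p] *)
  rewrite exchange_big /=; apply: eq_bigr => j _.
  have j_blk : (j %/ p < N)%N by rewrite ltn_divLR // -n_E.
  rewrite (bigD1 (Ordinal j_blk)) //= big1 => [|i /eqP i_neq].
    have -> : (j %/ p * p <= j < j %/ p * p + p)%N.
      by rewrite leq_divM /= -mulSnr -ltn_divLR.
    by rewrite addr0.
  case: ifP => // /andP [lo hi]; exfalso; apply: i_neq.
  apply: val_inj => /=; apply/eqP; rewrite eqn_leq leq_divRL //=.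
  by rewrite lo -ltnS ltn_divLR // mulSnr.
rewrite scalerA; congr (_ *: _); rewrite [in RHS]n_E natrM.
by field; rewrite !pnatr_eq0 -!lt0n N_gt0 p_gt0.
Qed.

Lemma sum_dotv_block_grad {R : realType} {d n p N : nat}
  {grad : 'I_n -> 'cV[R]_d -> 'cV[R]_d} (y v w : 'cV[R]_d) :
  (0 < p)%N -> n = (N * p)%N ->
  \sum_(i < N) dotv (block_grad p grad i y - v) w = N%:R * dotv (full_grad grad y - v) w.
Proof.
move=> p_gt0 n_E; rewrite -dotv_suml sumrB sum_block_grad // sumr_const card_ord.
by rewrite -(scaler_nat N v) -scalerBr dotvZl.
Qed.

Section Expectation.
Context {R : realType} {N t : nat}.
Implicit Types (F G : t.-tuple 'I_N -> R) (H K : t.-tuple 'I_N -> 'I_N -> R).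

Lemma expect_ge0 {F} : (forall s, 0 <= F s) -> 0 <= expect F.
Proof.
move=> F_ge0; rewrite mulr_ge0 ?invr_ge0 ?exprn_ge0 ?ler0n //.
by apply: sumr_ge0 => s _.
Qed.

Lemma expect_next0 {H} : N = 0%N -> expect_next H = 0.
Proof.
by move=> N0; rewrite /expect_next (_ : N%:R = 0) ?N0 // expr0n invr0 mul0r.
Qed.

Lemma expect_nextD H K :
  expect_next (fun s i => H s i + K s i) = expect_next H + expect_next K.
Proof. by rewrite /expect_next -mulrDr -big_split; under eq_bigr do rewrite -big_split. Qed.

Lemma expect_nextB H K :
  expect_next (fun s i => H s i - K s i) = expect_next H - expect_next K.
Proof. by rewrite /expect_next; under eq_bigr do rewrite sumrB; rewrite sumrB mulrBr. Qed.

Lemma expect_nextZ (k : R) H : expect_next (fun s i => k * H s i) = k * expect_next H.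
Proof.
by rewrite /expect_next; under eq_bigr do rewrite -mulr_sumr; rewrite -mulr_sumr mulrCA.
Qed.

Lemma expect_next_mean {H G} : (0 < N)%N ->
  (forall s, \sum_(i : 'I_N) H s i = N%:R * G s) -> expect_next H = expect G.
Proof.
move=> N_gt0 H_sum; rewrite /expect_next /expect (eq_bigr _ (fun s _ => H_sum s)).
have N_neq0 : N%:R != 0 :> R by rewrite pnatr_eq0 -lt0n.
by rewrite -mulr_sumr exprS; field; rewrite ?expf_neq0.
Qed.

Lemma expect_next_cst F : (0 < N)%N -> expect_next (fun s _ => F s) = expect F.
Proof.
by move=> N_gt0; apply: expect_next_mean => // s; rewrite sumr_const card_ord mulr_natl.
Qed.

Lemma ler_expect_next {H K} : (forall s i, H s i <= K s i) -> expect_next H <= expect_next K.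
Proof.
move=> le_HK; rewrite ler_wpM2l ?invr_ge0 ?exprn_ge0 ?ler0n //.
by apply: ler_sum => s _; apply: ler_sum => i _.
Qed.

End Expectation.

Theorem lemma4p1 (R : realType) (m d n p : nat)
  (f1 : 'cV[R]_m -> \bar R) (B : 'M[R]_(m, d))
  (phi : 'I_n -> 'cV[R]_d -> R) (grad : 'I_n -> 'cV[R]_d -> 'cV[R]_d)
  (c alpha lambda rho_max rho_min : R)
  (X : forall t : nat, t.-tuple 'I_(n %/ p) -> 'cV[R]_d)
  (V : forall t : nat, t.-tuple 'I_(n %/ p) -> 'cV[R]_m)
  (xs : 'cV[R]_d) (vs : 'cV[R]_m) :
  proper_fun f1 -> econvex_fun f1 -> lower_semicontinuous f1 ->
  (forall j, convex_fun (phi j)) -> (forall j, is_gradient (phi j) (grad j)) ->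
  (0 < p)%N -> (p %| n)%N ->
  eigenvalue (B *m B^T) rho_max ->
  (forall a, eigenvalue (B *m B^T) a -> a <= rho_max) ->
  eigenvalue (B *m B^T) rho_min ->
  (forall a, eigenvalue (B *m B^T) a -> rho_min <= a) ->
  0 < c -> 0 < alpha <= 1 -> 0 < lambda <= rho_max^-1 ->
  algorithm1 p f1 B grad c alpha lambda X V ->
  (forall x, (f1 (B *m xs) + (n%:R^-1 * \sum_(j < n) phi j xs)%R%:E
              <= f1 (B *m x) + (n%:R^-1 * \sum_(j < n) phi j x)%R%:E)%E) ->
  (forall k : nat, (1 <= k)%N ->
     let g := gamma c alpha k in
     let w := (lambda / g) *: (B *m (xs - g *: full_grad grad xs))
              + (1%:M - lambda *: (B *m B^T)) *m vs in
     is_prox (fun u => ((lambda / g)%R%:E * f1 ((g / lambda) *: u)%R)%E) w (w - vs)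
     /\ xs = xs - g *: full_grad grad xs - g *: (B^T *m vs)) ->
  forall t : nat,
    let gk := gamma c alpha t.+1 in
    let gk1 := gamma c alpha t.+2 in
    expect_next (fun s i =>
        sqn (X t.+1 (rcons_tuple s i) - xs)
        + gk1 ^+ 2 / lambda * sqn (V t.+1 (rcons_tuple s i) - vs))
    <= expect (fun s => sqn (X t s - xs))
       + gk ^+ 2 / lambda * (1 - lambda * rho_min)
           * expect (fun s => sqn (V t s - vs))
       - 2 * gk * expect (fun s =>
           dotv (full_grad grad (X t s) - full_grad grad xs) (X t s - xs))
       + gk ^+ 2 * expect_next (fun s i =>
           sqn (block_grad p grad i (X t s) - full_grad grad xs)).
Proof.
move=> f1_proper f1_convex _ _ _ p_gt0 p_dvd_n rho_max_eigen rho_max_ub _ rho_min_lb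
  c_gt0 /andP[alpha_gt0 _] /andP[lambda_gt0 lambda_le] alg _ fixed_point t.
cbv zeta; set gk := gamma c alpha t.+1; set gk1 := gamma c alpha t.+2.
set K := gk ^+ 2 / lambda * (1 - lambda * rho_min).
have gk_gt0 : 0 < gk by exact: gamma_gt0.
have gk1_bounds : 0 <= gk1 <= gk by rewrite ltW ?gamma_gt0 //= gamma_le ?ltW //= leqnSn.
have [prox_w xs_fix] := fixed_point t.+1 isT.
have step s i : sqn (X t.+1 (rcons_tuple s i) - xs)
    + gk1 ^+ 2 / lambda * sqn (V t.+1 (rcons_tuple s i) - vs)
  <= sqn (X t s - xs) + K * sqn (V t s - vs)
     - 2 * gk * dotv (block_grad p grad i (X t s) - full_grad grad xs) (X t s - xs)
     + gk ^+ 2 * sqn (block_grad p grad i (X t s) - full_grad grad xs).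
  have [[q [prox_q V_E]] X_E] := alg t s i.
  exact: (primal_dual_one_step lambda_gt0 (scaled_gram_le1 lambda_gt0 lambda_le rho_max_ub)
    f1_proper f1_convex (gram_eigen_lb rho_min_lb)
    gk_gt0 gk1_bounds prox_q V_E X_E prox_w xs_fix).
have n_E : n = (n %/ p * p)%N by rewrite divnK.
case: (posnP (n %/ p)) => [N0 | N_gt0].
  (* no blocks: then n = 0, so both averages over i_k and the full gradient vanish *)
  have K_ge0 : 0 <= K.
    apply: mulr_ge0; first by rewrite divr_ge0 ?sqr_ge0 ?ltW.
    by rewrite subr_ge0 (mul_le1_of_le_inv lambda_gt0 lambda_le (rho_min_lb _ rho_max_eigen)).
  have full_grad0 y : full_grad grad y = 0.
    by rewrite /full_grad (_ : n%:R = 0) ?invr0 ?scale0r // n_E N0.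
  have -> : expect (fun s => dotv (full_grad grad (X t s) - full_grad grad xs) (X t s - xs)) = 0.
    by rewrite /expect big1 ?mulr0 // => s _; rewrite !full_grad0 subrr dotvC dotv0r.
  rewrite !(expect_next0 N0) !mulr0 subr0 addr0.
  have A_ge0 := expect_ge0 (fun s => sqn_ge0 (X t s - xs)).
  have B_ge0 := expect_ge0 (fun s => sqn_ge0 (V t s - vs)).
  by apply: addr_ge0 => //; apply: mulr_ge0.
apply: (le_trans (ler_expect_next step)).
rewrite expect_nextD expect_nextB expect_nextD !expect_nextZ !expect_next_cst //.
by rewrite (expect_next_mean N_gt0 (fun s => sum_dotv_block_grad _ _ _ p_gt0 n_E)).
Qed.
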